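(* Let $\mathcal{C}\subseteq 2^{[n]}$ and $\mathcal{D}\subseteq 2^{[m]}$ be reduced codes and let $f:\mathcal{C}\to\mathcal{D}$ be an isomorphism. Then $n=m$ and $f$ is a permutation isomorphism: there is a permutation $w$ of $[n]$ with $f(c)=w(c)$ for all $c\in\mathcal{C}$.
   Context: A code is a subset $\mathcal{C}\subseteq 2^{[n]}$. For $\sigma\subseteq[n]$, $\mathrm{Tk}_{\mathcal{C}}(\sigma)=\{c\in\mathcal{C}\mid\sigma\subseteq c\}$, $\mathrm{Tk}_{\mathcal{C}}(i)=\mathrm{Tk}_{\mathcal{C}}(\{i\})$; a trunk in $\mathcal{C}$ is a subset that is empty or of this form. A morphism $f:\mathcal{C}\to\mathcal{D}$ is a function such that preimages of trunks in $\mathcal{D}$ are trunks in $\mathcal{C}$; an isomorphism is a morphism with an inverse function that is a morphism. A neuron $i$ is trivial if $\mathrm{Tk}_{\mathcal{C}}(i)=\emptyset$; a nontrivial neuron $i$ is redundant if $\mathrm{Tk}_{\mathcal{C}}(i)=\mathrm{Tk}_{\mathcal{C}}(\sigma)$ for some $\sigma$ with $i\notin\sigma$. A code $\mathcal{C}\subseteq 2^{[n]}$ is reduced if no $i\in[n]$ is trivial or redundant. For a permutation $w$ and $c\subseteq[n]$, $w(c)=\{w(i)\mid i\in c\}$. *)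

From mathcomp Require Import all_boot all_fingroup.
Set Implicit Arguments. Unset Strict Implicit. Unset Printing Implicit Defensive.

(* A code on [n] is a set of subsets of 'I_n (neurons are 0..n-1). *)
Definition code (n : nat) := {set {set 'I_n}}.

Definition Tk (n : nat) (C : code n) (sigma : {set 'I_n}) : {set {set 'I_n}} :=
  [set c in C | sigma \subset c].

Definition is_trunk (n : nat) (C : code n) (T : {set {set 'I_n}}) : Prop :=
  T = set0 \/ exists sigma : {set 'I_n}, T = Tk C sigma.

(* A function C -> D, represented by f on all subsets, mapping C into D;
   only its values on C matter. *)
Definition maps_into (n m : nat) (C : code n) (D : code m)
  (f : {set 'I_n} -> {set 'I_m}) : Prop :=
  forall c, c \in C -> f c \in D.

Definition preim_code (n m : nat) (C : code n)
  (f : {set 'I_n} -> {set 'I_m}) (T : {set {set 'I_m}}) : {set {set 'I_n}} :=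
  [set c in C | f c \in T].

Definition is_morphism (n m : nat) (C : code n) (D : code m)
  (f : {set 'I_n} -> {set 'I_m}) : Prop :=
  maps_into C D f /\
  forall T : {set {set 'I_m}}, T \subset D -> is_trunk D T ->
    is_trunk C (preim_code C f T).

Definition is_isomorphism (n m : nat) (C : code n) (D : code m)
  (f : {set 'I_n} -> {set 'I_m}) : Prop :=
  is_morphism C D f /\
  exists g : {set 'I_m} -> {set 'I_n},
    is_morphism D C g /\
    (forall c, c \in C -> g (f c) = c) /\
    (forall d, d \in D -> f (g d) = d).

Definition trivial_neuron (n : nat) (C : code n) (i : 'I_n) : Prop :=
  Tk C [set i] = set0.

Definition redundant_neuron (n : nat) (C : code n) (i : 'I_n) : Prop :=
  Tk C [set i] != set0 /\
  exists sigma : {set 'I_n}, i \notin sigma /\ Tk C [set i] = Tk C sigma.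

Definition reduced (n : nat) (C : code n) : Prop :=
  forall i : 'I_n, ~ trivial_neuron C i /\ ~ redundant_neuron C i.

From mathcomp Require Import all_boot all_fingroup.
Set Implicit Arguments. Unset Strict Implicit. Unset Printing Implicit Defensive.

(* Let g be an inverse of f.  Pulling the trunk Tk_C(i) back along g gives a
   trunk Tk_D(tau) of D, so Tk_C(i) is the f-preimage of Tk_D(tau), i.e. the
   intersection over j in tau of the f-preimages of Tk_D(j).  Each of these is
   a trunk Tk_C(sigma_j) containing Tk_C(i), so Tk_C(i) = Tk_C(U_j sigma_j);
   since i is not redundant, i lies in some sigma_j, and then the f-preimage of
   Tk_D(j) is exactly Tk_C(i).  This yields a map w on neurons with
   (i in c) = (w i in f c); the same holds for g, and because distinct neurons
   of a reduced code have distinct trunks the two maps are mutually inverse. *)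

Section Trunks.

Variables (n : nat) (C : code n).

Lemma Tk1P i c : (c \in Tk C [set i]) = (c \in C) && (i \in c).
Proof. by rewrite inE sub1set. Qed.

Lemma Tk_subset (s : {set 'I_n}) : Tk C s \subset C.
Proof. by apply/subsetP => c; rewrite inE => /andP[]. Qed.

Lemma subset_Tk (s t : {set 'I_n}) : s \subset t -> Tk C t \subset Tk C s.
Proof.
move=> st; apply/subsetP => c; rewrite !inE => /andP[-> tc].
exact: subset_trans tc.
Qed.

Lemma Tk_bigcup (I : finType) (J : {set I}) (s : I -> {set 'I_n}) :
  Tk C (\bigcup_(j in J) s j) = C :&: \bigcap_(j in J) Tk C (s j).
Proof.
apply/setP => c; rewrite !inE; case: (boolP (c \in C)) => //= cC.
apply/bigcupsP/bigcapP => [sc j jJ | Tc j jJ]; first by rewrite inE cC sc.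
by move: (Tc j jJ); rewrite inE cC.
Qed.

Lemma Tk_mem_eq (i i' : 'I_n) :
  {in C, forall c : {set 'I_n}, (i \in c) = (i' \in c)} -> Tk C [set i] = Tk C [set i'].
Proof.
move=> eqC; apply/setP => c; rewrite !Tk1P.
by case: (boolP (c \in C)) => //= /eqC ->.
Qed.

Hypothesis rC : reduced C.

Lemma reduced_Tk1_neq0 i : Tk C [set i] != set0.
Proof. by apply/eqP; have [] := rC i. Qed.

Lemma reduced_Tk1_mem i (s : {set 'I_n}) : Tk C [set i] = Tk C s -> i \in s.
Proof.
move=> eqTk; apply/negPn/negP => i_notin_s.
have [_ []] := rC i; split; [exact: reduced_Tk1_neq0 | by exists s].
Qed.

Lemma reduced_neuron_eq (i i' : 'I_n) :
  {in C, forall c : {set 'I_n}, (i \in c) = (i' \in c)} -> i = i'.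
Proof. by move=> /Tk_mem_eq eqTk; apply/set1P/reduced_Tk1_mem. Qed.

End Trunks.

Section Morphisms.

Variables (n m : nat) (C : code n) (D : code m) (f : {set 'I_n} -> {set 'I_m}).

Lemma preim_codeS (T T' : {set {set 'I_m}}) :
  T \subset T' -> preim_code C f T \subset preim_code C f T'.
Proof. by move=> TT'; apply/subsetP => c; rewrite !inE => /andP[-> /(subsetP TT')]. Qed.

Lemma morphism_preim_Tk (s : {set 'I_m}) : is_morphism C D f ->
  preim_code C f (Tk D s) != set0 -> exists sigma, preim_code C f (Tk D s) = Tk C sigma.
Proof.
move=> [_ ftrunk] nonempty.
have [P0|//] := ftrunk _ (Tk_subset D s) (or_intror (ex_intro _ s erefl)).
by rewrite P0 eqxx in nonempty.
Qed.

Hypothesis fD : maps_into C D f.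

Lemma preim_code_Tk1 j c : c \in C -> (c \in preim_code C f (Tk D [set j])) = (j \in f c).
Proof. by move=> cC; rewrite inE Tk1P cC fD. Qed.

Lemma preim_code_Tk (s : {set 'I_m}) :
  preim_code C f (Tk D s) = C :&: \bigcap_(j in s) preim_code C f (Tk D [set j]).
Proof.
apply/setP => c; rewrite inE in_setI; case: (boolP (c \in C)) => //= cC.
rewrite inE fD //=; apply/subsetP/bigcapP => [sc j js | Pc j js].
  by rewrite preim_code_Tk1 ?sc.
by rewrite -(preim_code_Tk1 _ cC) Pc.
Qed.

Lemma preim_code_cancel (g : {set 'I_m} -> {set 'I_n}) (T : {set {set 'I_n}}) :
  {in C, cancel f g} -> T \subset C -> preim_code C f (preim_code D g T) = T.
Proof.
move=> gf TC; apply/setP => c; rewrite !inE.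
case: (boolP (c \in C)) => [cC | /negPf cC]; first by rewrite fD ?gf.
by apply/esym/negbTE; apply: contraFN cC; apply: (subsetP TC).
Qed.

End Morphisms.

Lemma reduced_iso_neuron n m (C : code n) (D : code m) f g :
  reduced C -> is_morphism C D f -> is_morphism D C g -> {in C, cancel f g} ->
  forall i, exists j, {in C, forall c : {set 'I_n}, (i \in c) = (j \in f c)}.
Proof.
move=> rC fm gm gf i; have fD := fm.1.
have [c0 c0i] : exists c0, c0 \in Tk C [set i] by apply/set0Pn/reduced_Tk1_neq0.
have c0C : c0 \in C := subsetP (Tk_subset C _) c0 c0i.
have [tau Ptau] : exists tau, preim_code D g (Tk C [set i]) = Tk D tau.
  apply: (morphism_preim_Tk gm); apply/set0Pn; exists (f c0).
  by rewrite [_ \in preim_code _ _ _]inE fD // gf.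
have Pf_tau : preim_code C f (Tk D tau) = Tk C [set i].
  by rewrite -Ptau preim_code_cancel ?Tk_subset.
have iPf j : j \in tau -> Tk C [set i] \subset preim_code C f (Tk D [set j]).
  by move=> jt; rewrite -Pf_tau preim_codeS ?subset_Tk ?sub1set.
have /fin_all_exists [sigma Psigma] : forall j, exists sj,
    j \in tau -> preim_code C f (Tk D [set j]) = Tk C sj.
  move=> j; case: (boolP (j \in tau)) => [jt | _]; last by exists set0.
  have [|sj ->] := morphism_preim_Tk (s := [set j]) fm; last by exists sj.
  by apply/set0Pn; exists c0; apply: (subsetP (iPf j jt)).
have Tk_sigma : Tk C [set i] = Tk C (\bigcup_(j in tau) sigma j).
  by rewrite Tk_bigcup -Pf_tau preim_code_Tk //; congr (_ :&: _); apply: eq_bigr.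
have /bigcupP [j jt isj] := reduced_Tk1_mem rC Tk_sigma.
have Pf_j : preim_code C f (Tk D [set j]) = Tk C [set i].
  by apply/eqP; rewrite eqEsubset iPf // andbT Psigma // subset_Tk ?sub1set.
by exists j => c cC; rewrite -(preim_code_Tk1 fD) // Pf_j Tk1P cC.
Qed.

Theorem corollary3p3 (n m : nat) (C : code n) (D : code m)
  (f : {set 'I_n} -> {set 'I_m}) :
  reduced C -> reduced D -> is_isomorphism C D f ->
  exists e : n = m, exists w : {perm 'I_n},
    forall c, c \in C -> f c = [set cast_ord e (w i) | i in c].
Proof.
move=> rC rD [fm [g [gm [gf fg]]]]; have [fD gC] := (fm.1, gm.1).
have [w Hw] := fin_all_exists (reduced_iso_neuron rC fm gm gf).
have [v Hv] := fin_all_exists (reduced_iso_neuron rD gm fm fg).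
have wK : cancel w v.
  by move=> i; apply/esym/(reduced_neuron_eq rC) => c cC; rewrite Hw // Hv ?fD ?gf.
have vK : cancel v w.
  by move=> j; apply/esym/(reduced_neuron_eq rD) => d dD; rewrite Hv // Hw ?gC ?fg.
have e : n = m.
  by rewrite -[n]card_ord -[m]card_ord; apply: (bij_eq_card (Bijective wK vK)).
subst m; exists erefl, (perm (can_inj wK)) => c cC.
apply/setP => j; rewrite -[j]vK -Hw // -[w _](permE (can_inj wK)).
under eq_imset => i do rewrite cast_ord_id.
by rewrite mem_imset //; apply: perm_inj.
Qed.
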